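(* Let $n \leq 9$ and let $G$ be a connected $n$-vertex graph that is not isomorphic to any graph in $\mathcal{E}_4 = \{C_4, C_4', K_4, G_1, G_2, G_3, G_4, G_5, G_6\}$. Then $\iota(G, C_4) \leq 1$.
   Context: All graphs are finite and simple. For $D \subseteq V(G)$, $N[D]$ is the closed neighbourhood of $D$ and $G - N[D]$ the subgraph induced by $V(G)\setminus N[D]$. A set $D \subseteq V(G)$ is a $C_4$-isolating set of $G$ if $G - N[D]$ contains no subgraph isomorphic to the $4$-cycle $C_4$; $\iota(G, C_4)$ is the minimum size of such a set. $C_4'$ is the diamond graph on $\{1,2,3,4\}$ with edges $12,23,34,41,13$. The graphs $G_1,\dots,G_6$ all have vertex set $\{1,\dots,9\}$ and edge sets: $G_1$: all pairs $\{i,j\}$ with $j-i \equiv \pm1$ or $\pm 2 \pmod 9$; $G_2$: $56,58,59,54,61,67,68,12,17,19,23,28,29,34,37,38,47,49$; $G_3$: $56,57,58,54,67,68,61,71,74,82,83,43,49,12,19,23,29,39$; $G_4$: $12,13,14,15,23,26,27,36,37,45,48,49,58,59,67,69,78,89$; $G_5$: the edges of $G_4$ except $23$; $G_6$: the edges of $G_4$ except $23$ and $45$. *)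

From mathcomp Require Import all_boot.
Set Implicit Arguments. Unset Strict Implicit. Unset Printing Implicit Defensive.

(* A finite simple graph: a vertex finType T with an adjacency relation e,
   assumed symmetric and irreflexive (hypotheses in the theorem). *)

Definition closed_nbhd (T : finType) (e : rel T) (D : {set T}) : {set T} :=
  D :|: [set x | [exists y in D, e y x]].

Definition has_C4_outside (T : finType) (e : rel T) (D : {set T}) : Prop :=
  exists a b c d : T,
    [/\ uniq [:: a; b; c; d],
        all (fun v => v \notin closed_nbhd e D) [:: a; b; c; d] &
        [&& e a b, e b c, e c d & e d a]].

Definition C4_isolating (T : finType) (e : rel T) (D : {set T}) : Prop :=
  ~ has_C4_outside e D.

Definition iota_C4_le (T : finType) (e : rel T) (k : nat) : Prop :=
  exists D : {set T}, #|D| <= k /\ C4_isolating e D.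

Definition connected_graph (T : finType) (e : rel T) : Prop :=
  forall x y : T, connect e x y.

Definition graph_iso (T T' : finType) (e : rel T) (e' : rel T') : Prop :=
  exists f : T -> T', bijective f /\ forall x y, e' (f x) (f y) = e x y.

(* graph on 'I_k whose vertices are labelled 1..k, edges given as a list *)
Definition graph_of_edges (k : nat) (s : seq (nat * nat)) : rel 'I_k :=
  fun i j => ((i.+1, j.+1) \in s) || ((j.+1, i.+1) \in s).
Arguments graph_of_edges : clear implicits.

Definition C4g : rel 'I_4 := graph_of_edges 4 [:: (1,2); (2,3); (3,4); (4,1)].
Definition C4'g : rel 'I_4 := graph_of_edges 4 [:: (1,2); (2,3); (3,4); (4,1); (1,3)].
Definition K4g : rel 'I_4 := fun i j => i != j.

(* G1: {i,j} an edge iff j - i = +-1 or +-2 mod 9 *)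
Definition G1g : rel 'I_9 :=
  fun i j => ((j + 9 - i) %% 9) \in [:: 1; 2; 7; 8].

Definition G2g : rel 'I_9 := graph_of_edges 9
  [:: (5,6); (5,8); (5,9); (5,4); (6,1); (6,7); (6,8); (1,2); (1,7); (1,9);
      (2,3); (2,8); (2,9); (3,4); (3,7); (3,8); (4,7); (4,9)].
Definition G3g : rel 'I_9 := graph_of_edges 9
  [:: (5,6); (5,7); (5,8); (5,4); (6,7); (6,8); (6,1); (7,1); (7,4); (8,2);
      (8,3); (4,3); (4,9); (1,2); (1,9); (2,3); (2,9); (3,9)].
Definition G4_edges : seq (nat * nat) :=
  [:: (1,2); (1,3); (1,4); (1,5); (2,3); (2,6); (2,7); (3,6); (3,7); (4,5);
      (4,8); (4,9); (5,8); (5,9); (6,7); (6,9); (7,8); (8,9)].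
Definition G4g : rel 'I_9 := graph_of_edges 9 G4_edges.
Definition G5g : rel 'I_9 :=
  graph_of_edges 9 [seq p <- G4_edges | p != (2,3)].
Definition G6g : rel 'I_9 :=
  graph_of_edges 9 [seq p <- G4_edges | (p != (2,3)) && (p != (4,5))].

Definition in_E4 (T : finType) (e : rel T) : Prop :=
  graph_iso e C4g \/ graph_iso e C4'g \/ graph_iso e K4g \/
  graph_iso e G1g \/ graph_iso e G2g \/ graph_iso e G3g \/
  graph_iso e G4g \/ graph_iso e G5g \/ graph_iso e G6g.

From mathcomp Require Import all_boot zmodp.
From Stdlib Require Import Classical.
Set Implicit Arguments. Unset Strict Implicit. Unset Printing Implicit Defensive.

(* If no set of at most one vertex isolates every 4-cycle, then G contains a
   4-cycle, and for a vertex v on it G - N[v] still contains a 4-cycle abcd.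
   Numbering v, a, b, c, d as 0, ..., 4, the graph extends a fixed
   configuration on 5 <= n <= 9 vertices.  The extensions are enumerated by
   branching on the undecided pairs of vertices; a branch is closed as soon as
   a single vertex v' isolates every 4-cycle that could still appear (through
   vertices not known to lie in N[v'] and pairs not known to be non-edges).
   Every fully decided graph that survives is disconnected or isomorphic to one
   of G1, ..., G6, which is checked against a certificate: a closed set of
   vertices, resp. an explicit isomorphism. *)

(** * Graphs on an initial segment of nat *)

Definition C4_in n (S : pred nat) (E : rel nat) : Prop :=
  exists a b c d : nat,
    [/\ all (fun x => x < n) [:: a; b; c; d], uniq [:: a; b; c; d],
        all S [:: a; b; c; d] & [&& E a b, E b c, E c d & E d a]].

Definition isolable_by_vertex n (g : rel nat) : Prop :=
  exists2 v, v < n & ~ C4_in n (fun x => (x != v) && ~~ g v x) g.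

Definition disconnected n (g : rel nat) : Prop :=
  exists S : pred nat,
    [/\ S 0, exists2 j, j < n & ~~ S j & forall i k, i < n -> k < n -> S i -> g i k -> S k].

Definition exceptional_rel (k : nat) : rel 'I_9 :=
  match k with 1 => G1g | 2 => G2g | 3 => G3g | 4 => G4g | 5 => G5g | _ => G6g end.

Definition exceptional n (g : rel nat) : Prop :=
  n = 9 /\ exists2 k, k \in iota 1 6 & exists2 f : seq nat, perm_eq f (iota 0 9) &
    forall i j, i < 9 -> j < 9 ->
      g i j = exceptional_rel k (inZp (nth 0 f i)) (inZp (nth 0 f j)).

Definition search_outcome n (g : rel nat) : Prop :=
  [\/ isolable_by_vertex n g, disconnected n g | exceptional n g].

(** * Exhaustive search over partial adjacency matrices *)

(* vm_compute evaluates arguments eagerly, so [lazy_has] and the nested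
   [if]s below (rather than [has] and [&&]) are what make the search stop early. *)
Fixpoint lazy_has (p : pred nat) (s : seq nat) : bool :=
  if s is x :: s' then (if p x then true else lazy_has p s') else false.

Lemma lazy_hasE p s : lazy_has p s = has p s.
Proof. by elim: s => //= x s ->; case: (p x). Qed.

Lemma mem_iota_lt i n : i < n -> i \in iota 0 n.
Proof. by rewrite mem_iota. Qed.

(* A 4-cycle is a pair a < c of vertices with two distinct common neighbours. *)
Definition has_C4b n (S : pred nat) (E : rel nat) : bool :=
  let V := iota 0 n in
  lazy_has (fun a => if S a then lazy_has (fun c =>
    if a < c then if S c then
      1 < count (fun b =>
        if S b then if b != a then if b != c then
          (if E a b then E b c else false) else false else false else false) V
    else false else false) V else false) V.

Lemma count_gt1 (T : eqType) (p : pred T) s x y :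
  x != y -> x \in s -> y \in s -> p x -> p y -> 1 < count p s.
Proof.
move=> xy xs ys px py; rewrite -size_filter.
by apply: (uniq_leq_size (s1 := [:: x; y])) => [|z]; rewrite /= ?inE ?andbT //;
  case/orP=> /eqP->; rewrite mem_filter ?px ?py.
Qed.

Lemma has_C4b_complete n S E : symmetric E -> C4_in n S E -> has_C4b n S E.
Proof.
move=> Esym.
have diag x z y w : x < y -> all (fun v => v < n) [:: x; z; y; w] ->
    uniq [:: x; z; y; w] -> all S [:: x; z; y; w] ->
    [&& E x z, E z y, E y w & E w x] -> has_C4b n S E.
  move=> xy /and5P[xn zn yn wn _]; rewrite /= !inE !negb_or !andbT.
  case/and3P=> /and3P[xz _ xw] /andP[zy zw] yw /and4P[Sx Sz Sy Sw].
  case/and4P=> Exz Ezy Eyw Ewx.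
  rewrite /has_C4b lazy_hasE; apply/hasP; exists x; first exact: mem_iota_lt.
  rewrite Sx lazy_hasE; apply/hasP; exists y; first exact: mem_iota_lt.
  rewrite xy Sy; apply: (count_gt1 zw); rewrite ?mem_iota_lt //.
    by rewrite Sz eq_sym xz zy Exz Ezy.
  by rewrite Sw eq_sym xw eq_sym yw (Esym x) Ewx Esym Eyw.
case=> a [b [c [d [lt_n uq inS cyc]]]].
have [ac|ca|eq_ac] := ltngtP a c; first exact: diag ac lt_n uq inS cyc.
  have rot2 : perm_eq [:: c; d; a; b] [:: a; b; c; d].
    by rewrite -[[:: c; d; a; b]]/(rot 2 [:: a; b; c; d]) perm_rot.
  apply: (diag c d a b ca); rewrite ?(perm_all _ rot2) ?(perm_uniq rot2) //.
  by case/and4P: cyc => -> -> -> ->.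
by move: uq; rewrite eq_ac /= !inE eqxx /= orbT.
Qed.

Lemma C4_in_sub n (S S' : pred nat) (E E' : rel nat) :
  subpred S S' -> subrel E E' -> C4_in n S E -> C4_in n S' E'.
Proof.
move=> sS sE [a [b [c [d [lt_n uq inS /and4P[Eab Ebc Ecd Eda]]]]]].
exists a, b, c, d; split=> //; first exact: (sub_all sS).
by apply/and4P; split; apply: sE.
Qed.

(* [Some b] records a decided pair of vertices, [None] a pair still open. *)
Definition pmatrix := seq (seq (option bool)).

Definition pentry (M : pmatrix) i j : option bool := nth None (nth [::] M i) j.

Definition pset1 (M : pmatrix) i j b : pmatrix :=
  set_nth [::] M i (set_nth None (nth [::] M i) j (Some b)).

Definition pset (M : pmatrix) i j b : pmatrix := pset1 (pset1 M i j b) j i b.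

Definition agrees (g : rel nat) (M : pmatrix) : Prop :=
  forall i j b, pentry M i j = Some b -> g i j = b.

Lemma pentry_pset1 M i j b x y :
  pentry (pset1 M i j b) x y = if (x == i) && (y == j) then Some b else pentry M x y.
Proof.
rewrite /pentry /pset1 nth_set_nth /=; case: (eqVneq x i) => [-> | //] /=.
by rewrite nth_set_nth /=; case: eqP.
Qed.

Lemma agrees_pset g M i j : symmetric g -> agrees g M -> agrees g (pset M i j (g i j)).
Proof.
move=> gsym gM x y b; rewrite !pentry_pset1.
case: ifP => [/andP[/eqP-> /eqP->] [<-] | _]; first exact: gsym.
by case: ifP => [/andP[/eqP-> /eqP->] [<-] | _ /gM].
Qed.

(* Tested in both orders, so that it is symmetric by construction. *)
Definition possible_edge (M : pmatrix) : rel nat :=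
  fun i j => if pentry M i j != Some false then pentry M j i != Some false else false.

Definition vertex_isolates (M : pmatrix) n v : bool :=
  ~~ has_C4b n (fun x => if x != v then pentry M v x != Some true else false)
       (possible_edge M).

Lemma vertex_isolates_sound g M n v : symmetric g -> agrees g M ->
  v < n -> vertex_isolates M n v -> isolable_by_vertex n g.
Proof.
move=> gsym gM vn /negP noC4; exists v => // C4; apply/noC4/has_C4b_complete.
  by move=> x y; rewrite /possible_edge; do 2!case: (_ != _).
apply: C4_in_sub C4 => [x /andP[-> gvx] | x y gxy] /=.
  by apply: contra gvx => /eqP/gM->.
have open_edge i j : g i j -> pentry M i j != Some false.
  by move=> gij; apply: contraTneq gij => /gM->.
by rewrite /possible_edge !open_edge // gsym.
Qed.

Definition reach_step n (g : rel nat) (R : seq bool) : seq bool :=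
  [seq nth false R k || has (fun i => nth false R i && g i k) (iota 0 n) | k <- iota 0 n].

Definition reachable_from0 n (g : rel nat) : seq bool :=
  iter n (reach_step n g) [seq k == 0 | k <- iota 0 n].

(* [reachable_from0] only proposes the component of 0; soundness rests on the
   closure test in [disconnectedb]. *)
Definition disconnectedb n (g : rel nat) : bool :=
  let R := nth false (reachable_from0 n g) in
  [&& R 0, has (fun j => ~~ R j) (iota 0 n) &
      all (fun i => R i ==> all (fun k => g i k ==> R k) (iota 0 n)) (iota 0 n)].

Lemma disconnectedb_sound n g : disconnectedb n g -> disconnected n g.
Proof.
case/and3P=> R0 /hasP[j]; rewrite mem_iota => /= jn Rj /allP Rclosed.
exists (nth false (reachable_from0 n g)); split=> //; first by exists j.
move=> i k ilt klt Ri gik.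
have /implyP/(_ Ri)/allP/(_ k) := Rclosed i (mem_iota_lt ilt).
by rewrite mem_iota_lt // gik; apply.
Qed.

Definition adj_matrix n (g : rel nat) : seq (seq bool) :=
  [seq [seq g i j | j <- iota 0 n] | i <- iota 0 n].

Definition adj_at (A : seq (seq bool)) : rel nat := fun i j => nth false (nth [::] A i) j.

Lemma adj_at_matrix n g i j : i < n -> j < n -> adj_at (adj_matrix n g) i j = g i j.
Proof.
by move=> ilt jlt; rewrite /adj_at (nth_map 0) ?(nth_map 0) ?nth_iota ?size_iota.
Qed.

Definition exceptional_adj k : rel nat :=
  adj_at (adj_matrix 9 (fun i j => exceptional_rel k (inZp i) (inZp j))).

Definition vertex_signature (g : rel nat) v : nat * nat :=
  (count (g v) (iota 0 9),
   sumn [seq count (fun y => [&& g v x, g v y & g x y]) (iota 0 9) | x <- iota 0 9]).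

Definition signature (g : rel nat) : seq (nat * nat) :=
  [seq vertex_signature g v | v <- iota 0 9].

(* A closed constant, so vm_compute evaluates it only once. *)
Definition exceptional_signatures : seq (seq (nat * nat)) :=
  [seq signature (exceptional_adj k) | k <- iota 1 6].

Fixpoint find_some (F : nat -> option (seq nat)) (s : seq nat) : option (seq nat) :=
  if s is y :: s' then (if F y is Some f then Some f else find_some F s') else None.

Fixpoint extend_iso (g H : rel nat) (sg sH : seq (nat * nat)) fuel f :=
  if fuel is fuel'.+1 then
    let k := size f in
    find_some (fun y =>
      if [&& y \notin f, nth (0, 0) sg k == nth (0, 0) sH y
           & all (fun i => g i k == H (nth 0 f i) y) (iota 0 k)]
      then extend_iso g H sg sH fuel' (rcons f y) else None) (iota 0 9)
  else Some f.

Definition iso_certificate (g H : rel nat) (f : seq nat) : bool :=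
  perm_eq f (iota 0 9) &&
  all (fun i => all (fun j => g i j == H (nth 0 f i) (nth 0 f j)) (iota 0 9)) (iota 0 9).

(* The signatures only prune the search for a candidate isomorphism, which is
   then verified by [iso_certificate]. *)
Definition exceptionalb n (g : rel nat) : bool :=
  if n == 9 then
    let sg := signature g in
    lazy_has (fun k =>
      let sH := nth [::] exceptional_signatures k.-1 in
      if perm_eq sg sH then
        let H := exceptional_adj k in
        if extend_iso g H sg sH 9 [::] is Some f then iso_certificate g H f else false
      else false) (iota 1 6)
  else false.

Lemma nth_perm_iota f m l : perm_eq f (iota 0 m) -> l < m -> nth 0 f l < m.
Proof.
move=> perm_f lm; have: nth 0 f l \in f by rewrite mem_nth ?(perm_size perm_f) ?size_iota.
by rewrite (perm_mem perm_f) mem_iota.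
Qed.

Lemma exceptionalb_sound n g : exceptionalb n g -> exceptional n g.
Proof.
rewrite /exceptionalb; case: eqP => // n9; rewrite lazy_hasE => /hasP[k k16].
case: ifP => // _; case: extend_iso => // f /andP[perm_f /allP gf].
split=> //; exists k => //; exists f => // i j ilt jlt.
have /allP/(_ j (mem_iota_lt jlt))/eqP-> := gf i (mem_iota_lt ilt).
by rewrite /exceptional_adj adj_at_matrix ?nth_perm_iota.
Qed.

Definition decided_graph (M : pmatrix) : rel nat :=
  fun i j => (i != j) && (pentry M i j == Some true).

Definition fully_decided n (M : pmatrix) : bool :=
  all (fun i => all (fun j => (i == j) || (pentry M i j != None)) (iota 0 n)) (iota 0 n).

Definition leaf n (M : pmatrix) : bool :=
  fully_decided n M &&
  (let g := adj_at (adj_matrix n (decided_graph M)) in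
   disconnectedb n g || exceptionalb n g).

Lemma disconnected_ext n g h :
  (forall i j, i < n -> j < n -> g i j = h i j) -> disconnected n h -> disconnected n g.
Proof.
move=> gh [S [S0 Sj Sclosed]]; exists S; split=> // i k ilt klt Si.
by rewrite gh //; apply: Sclosed.
Qed.

Lemma exceptional_ext n g h :
  (forall i j, i < n -> j < n -> g i j = h i j) -> exceptional n h -> exceptional n g.
Proof.
move=> gh [n9 [k k16 [f perm_f hf]]]; split=> //; exists k => //.
by exists f => // i j ilt jlt; rewrite gh ?n9 // hf.
Qed.

Lemma leaf_sound n M g : irreflexive g -> agrees g M -> leaf n M -> search_outcome n g.
Proof.
move=> girr gM /andP[/allP decided outcome].
have g_dec i j : i < n -> j < n -> g i j = adj_at (adj_matrix n (decided_graph M)) i j.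
  move=> ilt jlt; rewrite adj_at_matrix // /decided_graph.
  case: eqVneq => [-> | ij]; first exact: girr.
  have /allP/(_ j (mem_iota_lt jlt)) := decided i (mem_iota_lt ilt).
  rewrite (negbTE ij); case Mij: (pentry M i j) => [b|] // _.
  by rewrite (gM _ _ _ Mij); case: b {Mij}.
case/orP: outcome => [/disconnectedb_sound | /exceptionalb_sound] out.
  by apply: Or32; apply: disconnected_ext out.
by apply: Or33; apply: exceptional_ext out.
Qed.

Fixpoint search n (M : pmatrix) (todo : seq (nat * nat)) : bool :=
  if lazy_has (vertex_isolates M n) (iota 0 n) then true else
  if todo is (i, j) :: todo' then
    search n (pset M i j true) todo' && search n (pset M i j false) todo'
  else leaf n M.

Lemma search_sound n M todo g : symmetric g -> irreflexive g -> agrees g M ->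
  search n M todo -> search_outcome n g.
Proof.
move=> gsym girr.
have isolable M' : agrees g M' -> lazy_has (vertex_isolates M' n) (iota 0 n) ->
    search_outcome n g.
  move=> gM'; rewrite lazy_hasE => /hasP[v]; rewrite mem_iota => vlt isol.
  exact/Or31/(vertex_isolates_sound gsym gM' vlt isol).
elim: todo M => [|[i j] todo IH] M gM /=; case: ifP => [/(isolable M gM) // | _].
  exact: leaf_sound.
case/andP=> search_t search_f; have := agrees_pset (i := i) (j := j) gsym gM.
by case: (g i j) => gM'; [apply: IH gM' search_t | apply: IH gM' search_f].
Qed.

Definition base_config : seq (nat * nat * bool) :=
  [:: (0, 1, false); (0, 2, false); (0, 3, false); (0, 4, false);
      (1, 2, true); (2, 3, true); (3, 4, true); (1, 4, true)].

Definition base_pmatrix : pmatrix :=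
  foldr (fun t M => pset M t.1.1 t.1.2 t.2) [::] base_config.

Definition open_pairs n : seq (nat * nat) :=
  [seq p <- [seq (i, j) | i <- iota 0 n, j <- iota 0 n]
     | (p.1 < p.2) && (pentry base_pmatrix p.1 p.2 == None)].

Lemma agrees_base g : symmetric g ->
  all (fun t => g t.1.1 t.1.2 == t.2) base_config -> agrees g base_pmatrix.
Proof.
rewrite /base_pmatrix; elim: base_config => [|[[i j] b] config IH] gsym /=.
  by move=> _ i j b; rewrite /pentry !nth_nil.
by case/andP=> /eqP <- /(IH gsym); apply: agrees_pset.
Qed.

Lemma search_base : all (fun n => search n base_pmatrix (open_pairs n)) (iota 5 5).
Proof. by vm_compute. Qed.

(** * Transfer to finite graphs *)

Lemma in_closed_nbhd1 (T : finType) (e : rel T) w x :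
  (x \in closed_nbhd e [set w]) = (x == w) || e w x.
Proof.
rewrite /closed_nbhd in_setU in_set1 in_set; congr (_ || _).
by apply/existsP/idP => [[y /andP[/set1P-> //]] | ewx]; exists w; rewrite in_set1 eqxx.
Qed.

Definition relabel (T : finType) (e : rel T) (x0 : T) (s : seq T) : rel nat :=
  fun i j => e (nth x0 s i) (nth x0 s j).

Section Relabel.

Variables (T : finType) (e : rel T) (x0 : T) (s : seq T).
Hypotheses (s_uniq : uniq s) (mem_s : forall x, x \in s).

Local Notation g := (relabel e x0 s).

Lemma card_relabel : #|T| = size s.
Proof. by rewrite -(card_uniqP s_uniq); apply: eq_card => x; rewrite mem_s. Qed.

Lemma index_lt x : index x s < size s.
Proof. by rewrite index_mem. Qed.

Lemma relabel_index x y : g (index x s) (index y s) = e x y.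
Proof. by rewrite /relabel !nth_index. Qed.

Lemma iota_C4_le_relabel : isolable_by_vertex (size s) g -> iota_C4_le e 1.
Proof.
case=> v vlt noC4; exists [set nth x0 s v]; split; first by rewrite cards1.
case=> a [b [c [d [uq out cyc]]]]; apply: noC4.
have out_S x : x \notin closed_nbhd e [set nth x0 s v] ->
    (index x s != v) && ~~ g v (index x s).
  rewrite in_closed_nbhd1 negb_or => /andP[xw ewx]; apply/andP; split.
    by apply: contra xw => /eqP <-; rewrite nth_index.
  by rewrite /relabel nth_index.
exists (index a s), (index b s), (index c s), (index d s); split.
- by rewrite /= !index_lt.
- rewrite -[[:: index a s; _; _; _]]/(map (index^~ s) [:: a; b; c; d]).
  by rewrite map_inj_in_uniq // => x y _ _; apply: index_inj.
- by case/and5P: out => *; rewrite /= !out_S.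
- by rewrite !relabel_index.
Qed.

Lemma relabel_disconnected : disconnected (size s) g -> ~ connected_graph e.
Proof.
case=> S [S0 [j jlt Sj] Sclosed] conn.
have S_path x p : S (index x s) -> path e x p -> S (index (last x p) s).
  elim: p x => //= y p IH x Sx /andP[exy pth]; apply: IH pth.
  by apply: Sclosed Sx _; rewrite ?index_lt ?relabel_index.
have /connectP[p pth lastp] := conn (nth x0 s 0) (nth x0 s j).
have := S_path _ _ _ pth; rewrite -lastp !index_uniq ?(leq_ltn_trans _ jlt) //.
by move=> /(_ S0); apply/negP.
Qed.

Lemma in_E4_relabel : exceptional (size s) g -> in_E4 e.
Proof.
case=> n9 [k k16 [f perm_f gf]].
pose F x : 'I_9 := inZp (nth 0 f (index x s)).
have F_val x : val (F x) = nth 0 f (index x s).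
  by rewrite /= modn_small // nth_perm_iota // -n9 index_lt.
have F_inj : injective F.
  move=> x y /(congr1 val); rewrite !F_val => /eqP.
  rewrite nth_uniq ?(perm_uniq perm_f) ?iota_uniq ?(perm_size perm_f) ?size_iota -?n9 ?index_lt //.
  by move/eqP/index_inj; apply.
have F_bij : bijective F by apply: inj_card_bij F_inj _; rewrite card_ord card_relabel n9.
have iso : graph_iso e (exceptional_rel k).
  by exists F; split=> // x y; rewrite -relabel_index gf -?n9 ?index_lt.
rewrite /in_E4; clear gf; case: k k16 iso => [|[|[|[|[|[|[|k]]]]]]] // _ iso; tauto.
Qed.

End Relabel.

Definition enum_from (T : finType) (p : seq T) : seq T :=
  p ++ [seq x <- enum T | x \notin p].

Lemma mem_enum_from (T : finType) (p : seq T) x : x \in enum_from p.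
Proof. by rewrite mem_cat mem_filter mem_enum andbT orbN. Qed.

Lemma enum_from_uniq (T : finType) (p : seq T) : uniq p -> uniq (enum_from p).
Proof.
move=> p_uniq; rewrite cat_uniq p_uniq filter_uniq ?enum_uniq // andbT.
by apply/hasPn => x; rewrite mem_filter => /andP[].
Qed.

Lemma C4_config (T : finType) (e : rel T) : ~ iota_C4_le e 1 ->
  exists v a b c d : T,
    [/\ uniq [:: v; a; b; c; d], ~~ [|| e v a, e v b, e v c | e v d]
       & [&& e a b, e b c, e c d & e d a]].
Proof.
move=> not_iota.
have C4_out (D : {set T}) : #|D| <= 1 -> has_C4_outside e D.
  by move=> D1; apply: NNPP => isolating; apply: not_iota; exists D.
have [|v _] := C4_out set0; first by rewrite cards0.
have [|a [b [c [d [uq out cyc]]]]] := C4_out [set v]; first by rewrite cards1.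
case/and5P: out; rewrite !in_closed_nbhd1 !negb_or.
case/andP=> av eva /andP[bv evb] /andP[cv evc] /andP[dv evd] _.
exists v, a, b, c, d; split=> //; last by rewrite !negb_or eva evb evc evd.
by rewrite cons_uniq uq andbT !inE !negb_or ![v == _]eq_sym av bv cv dv.
Qed.

Lemma relabel_base_config (T : finType) (e : rel T) v a b c d : symmetric e ->
  ~~ [|| e v a, e v b, e v c | e v d] -> [&& e a b, e b c, e c d & e d a] ->
  agrees (relabel e v (enum_from [:: v; a; b; c; d])) base_pmatrix.
Proof.
move=> e_sym; rewrite !negb_or => /and4P[eva evb evc evd] /and4P[eab ebc ecd eda].
apply: agrees_base => [i j | ]; first exact: e_sym.
by rewrite /= /relabel /= (negbTE eva) (negbTE evb) (negbTE evc) (negbTE evd)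
  eab ebc ecd (e_sym a) eda.
Qed.

Theorem lemma5 (T : finType) (e : rel T) :
  symmetric e -> irreflexive e ->
  #|T| <= 9 ->
  connected_graph e ->
  ~ in_E4 e ->
  iota_C4_le e 1.
Proof.
move=> e_sym e_irr card9 conn notE4; apply: NNPP => not_iota.
have [v [a [b [c [d [uq nonadj cyc]]]]]] := C4_config not_iota.
pose s := enum_from [:: v; a; b; c; d].
have s_uniq : uniq s := enum_from_uniq uq.
have mem_s := @mem_enum_from _ [:: v; a; b; c; d].
have n_range : size s \in iota 5 5.
  rewrite mem_iota -(card_relabel s_uniq mem_s) (leq_ltn_trans card9) // andbT.
  by rewrite (card_relabel s_uniq mem_s) size_cat leq_addr.
have g_sym : symmetric (relabel e v s) by move=> i j; apply: e_sym.
have g_irr : irreflexive (relabel e v s) by move=> i; apply: e_irr.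
have g_base := relabel_base_config e_sym nonadj cyc.
case: (search_sound g_sym g_irr g_base (allP search_base _ n_range)) => [iso | dis | exc].
- exact: not_iota (iota_C4_le_relabel mem_s iso).
- exact: relabel_disconnected s_uniq mem_s dis conn.
- exact: notE4 (in_E4_relabel s_uniq mem_s exc).
Qed.
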